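(* Let $p$ be an odd prime, $k\ge1$, and write $\phi(p^k)=2^\theta\mu$ with $\mu$ odd. For every integer $r\ge1$, the graph $\mathcal{U}_{p^k}$ has a connected component isomorphic to $C_r(T_2^\theta)$ if and only if $\mu$ is divisible by some triggering divisor of $r$.
   Context: $\mathcal{G}_{n}$ is the directed graph on $\{0,\dots,n-1\}$ with an edge $x\to x^2\bmod n$ for each $x$, and $\mathcal{U}_n$ is its subgraph induced on the units mod $n$. $\phi$ is Euler's totient function. For odd $d\ge1$, $\mathrm{ord}_d(2)$ is the least positive integer $r$ with $d\mid 2^r-1$. A positive odd integer $d$ is a triggering divisor for $r$ if $\mathrm{ord}_d(2)=r$ and $\mathrm{ord}_e(2)\neq r$ for every proper positive divisor $e$ of $d$. The regular grounded tree $T_w^\ell$ has $w^\ell$ vertices in layers $0,\dots,\ell$. Layer $0$ is the root, which has a loop. Layer $1$ has $w-1$ vertices mapping to the root. Each vertex of layer $j$, $1\le j<\ell$, has exactly $w$ vertices of layer $j+1$ mapping to it. Layer $\ell$ consists of leaves. For a grounded tree $T$ and $\alpha\ge1$, the flower cycle $C_\alpha(T)$ is built as follows: take $\alpha$ disjoint copies of $T$, delete the root loops, and join the roots by edges root$_i\to$root$_{i+1 \bmod \alpha}$. *)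

From Stdlib Require Import Relations.Relation_Operators.
From mathcomp Require Import all_boot.
Set Implicit Arguments. Unset Strict Implicit. Unset Printing Implicit Defensive.

Record digraph := Digraph {
  carrier : Type;
  vert : carrier -> Prop;
  edge : carrier -> carrier -> Prop }.
Arguments vert : clear implicits.
Arguments edge : clear implicits.

Definition vtype (G : digraph) := {x : carrier G | vert G x}.

Definition induced (G : digraph) (P : carrier G -> Prop) : digraph :=
  Digraph (fun x => vert G x /\ P x) (@edge G).

Definition graph_iso (G H : digraph) : Prop :=
  exists g : vtype G -> vtype H, bijective g /\
    forall u v : vtype G, edge G (sval u) (sval v) <-> edge H (sval (g u)) (sval (g v)).

Definition wconn (G : digraph) : carrier G -> carrier G -> Prop :=
  clos_refl_sym_trans (carrier G) (fun a b => vert G a /\ vert G b /\ edge G a b).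

Definition component (G : digraph) (x : carrier G) : digraph :=
  @induced G (@wconn G x).
Arguments component : clear implicits.
Arguments wconn : clear implicits.
Arguments induced : clear implicits.

Definition has_component_iso (G H : digraph) : Prop :=
  exists x, vert G x /\ graph_iso (component G x) H.

Definition Gsq (n : nat) : digraph :=
  Digraph (fun x : nat => x < n) (fun x y => y = (x ^ 2) %% n).
Definition Usq (n : nat) : digraph := induced (Gsq n) (fun x => coprime x n).

(* Grounded tree: a digraph with a distinguished root carrying a loop. *)
Record grounded_tree := GTree { tgraph : digraph; troot : carrier tgraph }.
Arguments GTree : clear implicits.

(* Flower cycle C_alpha(T): alpha copies (indexed by i < alpha), root loops
   deleted, edges root_i -> root_{(i+1) mod alpha} added. *)
Definition flower (alpha : nat) (T : grounded_tree) : digraph :=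
  let G := tgraph T in let r := troot T in
  Digraph (fun it : nat * carrier G => it.1 < alpha /\ vert G it.2)
    (fun it jt =>
       (it.1 = jt.1 /\ edge G it.2 jt.2 /\ ~ (it.2 = r /\ jt.2 = r)) \/
       (it.2 = r /\ jt.2 = r /\ jt.1 = (it.1 + 1) %% alpha)).

(* Regular grounded tree T_w^l: a vertex of layer j is a sequence [a1;...;aj]
   with 1 <= a1 < w, 0 <= ai < w, j <= l; the root is [::]; the edge goes
   from [a1;...;aj] to [a1;...;a(j-1)] (root has a loop). *)
Definition regtree (w l : nat) : grounded_tree :=
  GTree (Digraph
    (fun s : seq nat => [&& size s <= l, all (fun a => a < w) s &
                            (s == [::]) || (head 0 s != 0)])
    (fun s t => t = take (size s).-1 s))
    [::].

Definition ord2_is (d r : nat) : Prop :=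
  0 < r /\ d %| 2 ^ r - 1 /\ forall s, 0 < s -> s < r -> ~ (d %| 2 ^ s - 1).

Definition triggering (d r : nat) : Prop :=
  0 < d /\ odd d /\ ord2_is d r /\
  forall e, 0 < e -> e %| d -> e != d -> ~ ord2_is e r.

From mathcomp Require Import all_boot all_fingroup all_algebra all_solvable.
From mathcomp Require Import zify.
From Stdlib Require Import Classical ProofIrrelevance ClassicalEpsilon Relation_Operators.
Set Implicit Arguments. Unset Strict Implicit. Unset Printing Implicit Defensive.
Import GRing.Theory.

(* The units mod p^k form a cyclic group of order N = 2^theta * mu; writing them as powers
   of a primitive root g, squaring becomes doubling of the exponent modulo N, i.e. doubling
   on Z/2^theta x Z/mu.  Doubling on Z/2^theta is the tree T_2^theta, and on Z/mu the
   doubling orbit of mu/d is a cycle of length ord_d(2).  Hence, if d | mu and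
   ord_d(2) = r, the exponents whose Z/mu-part lies on that orbit form a component
   isomorphic to C_r(T_2^theta).  Conversely, if g^e lies on the r-cycle of such a
   component, then ord_D(2) = r for D = N / gcd(N, e), an odd divisor of N and hence of mu,
   and a minimal divisor of D of the same order is triggering. *)

Lemma vtype_eq (G : digraph) (x y : vtype G) : sval x = sval y -> x = y.
Proof. by apply: eq_sig_hprop => a p q; apply: proof_irrelevance. Qed.

Lemma graph_iso_sym (G H : digraph) : graph_iso G H -> graph_iso H G.
Proof.
case=> g [[g' gK g'K] gE]; exists g'; split; first by exists g.
by move=> u v; rewrite (gE (g' u) (g' v)) !g'K.
Qed.

Lemma graph_iso_of_map (G H : digraph) (f : carrier G -> carrier H) :
  (forall x, vert G x -> vert H (f x)) ->
  (forall x y, vert G x -> vert G y -> f x = f y -> x = y) ->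
  (forall y, vert H y -> exists2 x, vert G x & f x = y) ->
  (forall x y, vert G x -> vert G y -> edge G x y <-> edge H (f x) (f y)) ->
  graph_iso G H.
Proof.
move=> fV f_inj f_surj fE.
pose g (x : vtype G) : vtype H := exist _ (f (sval x)) (fV _ (svalP x)).
have g_surj (y : vtype H) : exists x, g x = y.
  have [x Gx fx] := f_surj _ (svalP y).
  by exists (exist _ x Gx); apply: vtype_eq.
pose g' y := sval (constructive_indefinite_description _ (g_surj y)).
have g'K : cancel g' g.
  by move=> y; rewrite /g'; case: constructive_indefinite_description.
exists g; split; last by move=> [x Gx] [y Gy]; apply: fE.
exists g' => // x; apply: vtype_eq; apply: f_inj; try exact: svalP.
by rewrite -[f _]/(sval (g (g' (g x)))) g'K.
Qed.

Definition primitive_root_mod (n N g : nat) : Prop :=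
  [/\ coprime g n,
      forall e e', g ^ e = g ^ e' %[mod n] <-> e = e' %[mod N] &
      forall w, w < n -> coprime w n -> exists e, w = g ^ e %% n].

Lemma Zp_val_expn q (x : 'Z_q) e : 1 < q -> val (x ^+ e)%R = val x ^ e %% q.
Proof. by move=> q_gt1; rewrite -{1}(natr_Zp x) -natrX; apply: val_Zp_nat. Qed.

(* The units of Z/p^k are the automorphisms of the cyclic p-group Z/p^k, and this
   automorphism group is cyclic for odd p. *)
Lemma odd_prime_power_primitive_root p k : prime p -> odd p -> 0 < k ->
  exists g, primitive_root_mod (p ^ k) (totient (p ^ k)) g.
Proof.
move=> p_pr p_odd k_gt0; set q := p ^ k.
have q_gt1 : 1 < q by rewrite /q -{1}(exp1n k) ltn_exp2r // prime_gt1.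
pose G := [set: 'Z_q]%G.
have oG : #|G| = q by rewrite cardsT card_ord Zp_cast.
have pG : pgroup p G by rewrite /pgroup oG pnatX pnat_id.
have cG : cyclic G by rewrite /G /= Zp_cycle cycle_cyclic.
have ntG : G :!=: 1%g by rewrite -cardG_gt1 oG.
have /= [m [[_ _ [m_inj m_im] m_exp _] [_ cF _ _] AutG]] := cyclic_pgroup_Aut_structure pG cG ntG.
have cA : cyclic (Aut G).
  move: AutG; case: ifP => _; first by move=> ->.
  by case=> t [_ _ _]; rewrite p_odd => -[[]].
have [a defA] := cyclicP cA.
have aA : a \in Aut G by rewrite defA cycle_id.
have oa : #[a]%g = totient q by rewrite orderE -defA card_Aut_cyclic // oG.
have oG1 : 1 < #|G| by rewrite oG.
have m_val e : val (m (a ^+ e)%g) = val (m a) ^ e %% q.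
  by rewrite m_exp // Zp_val_expn //; congr (_ %% _).
exists (val (m a)); split.
- have ua : (m a \is a GRing.unit)%R by rewrite -m_im; apply: map_f; rewrite mem_enum.
  by rewrite -[X in coprime _ X]oG coprime_sym -unitZpE // natr_Zp.
- move=> e e'; rewrite -!m_val; split.
    move/val_inj/m_inj; rewrite !groupX // => /(_ isT isT) /eqP.
    by rewrite eq_expg_mod_order oa => /eqP.
  by move=> ee'; congr (val (m _)); apply/eqP; rewrite eq_expg_mod_order oa ee'.
move=> w wq cw.
have : ((w%:R : 'Z_#|G|) \is a GRing.unit)%R by rewrite unitZpE // oG coprime_sym.
rewrite -m_im => /imageP [b]; rewrite defA => /cycleP [e ->] wE.
by exists e; rewrite -m_val -wE Zp_nat /= Zp_cast // oG modn_small.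
Qed.

Lemma eqn_modMl_coprime m c x y :
  coprime m c -> c * x = c * y %[mod m] -> x = y %[mod m].
Proof.
wlog le_xy : x y / x <= y.
  move=> W cm E; case/orP: (leq_total x y) => h; first exact: W.
  by apply/esym/W => //; apply/esym.
move=> cm /eqP; rewrite eq_sym eqn_mod_dvd ?leq_mul2l ?le_xy ?orbT //.
by rewrite -mulnBr Gauss_dvdr // => H; apply/esym/eqP; rewrite eqn_mod_dvd.
Qed.

Lemma dvdn_mul_divgcd N e t : 0 < N -> (N %| e * t) = (N %/ gcdn N e %| t).
Proof.
move=> N_gt0; set G := gcdn N e.
have G_gt0 : 0 < G by rewrite gcdn_gt0 N_gt0.
have defN : N = N %/ G * G by rewrite divnK // dvdn_gcdl.
have defe : e = e %/ G * G by rewrite divnK // dvdn_gcdr.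
have cop : coprime (N %/ G) (e %/ G).
  by rewrite /coprime -(eqn_pmul2r G_gt0) mul1n muln_gcdl -defN -defe.
by rewrite {1}defN {1}defe mulnAC dvdn_pmul2r // Gauss_dvdr.
Qed.

Lemma ord2_is_odd d r : ord2_is d r -> odd d.
Proof.
case=> r_gt0 [dvd_d _]; apply: (dvdn_odd dvd_d).
by rewrite oddB ?expn_gt0 // oddX; case: r r_gt0 {dvd_d}.
Qed.

Lemma ord2_is_dvdP d r :
  0 < r -> (forall m, d %| 2 ^ m - 1 <-> r %| m) -> ord2_is d r.
Proof.
move=> r_gt0 dP; split=> //; split; first exact/dP.
by move=> s s_gt0 lt_sr /dP /(dvdn_leq s_gt0); lia.
Qed.

Lemma expn2_mod_ord d r a : ord2_is d r -> 2 ^ a = 2 ^ (a %% r) %[mod d].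
Proof.
case=> r_gt0 [dvd_d _].
have two_r : 2 ^ r = 1 %[mod d] by apply/eqP; rewrite eqn_mod_dvd ?expn_gt0.
have -> : 2 ^ a = (2 ^ r) ^ (a %/ r) * 2 ^ (a %% r).
  by rewrite -expnM -expnD mulnC -divn_eq.
by rewrite -modnMml -modnXm two_r modnXm exp1n modnMml mul1n.
Qed.

Lemma expn2_eq_mod_ord d r a b :
  ord2_is d r -> a = b %[mod r] -> 2 ^ a = 2 ^ b %[mod d].
Proof. by move=> dr ab; rewrite (expn2_mod_ord a dr) (expn2_mod_ord b dr) ab. Qed.

Lemma expn2_inj_ord d r a b :
  ord2_is d r -> a < r -> b < r -> 2 ^ a = 2 ^ b %[mod d] -> a = b.
Proof.
move=> dr; wlog le_ab : a b / a <= b.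
  move=> W ar br E; case/orP: (leq_total a b) => h; first exact: W.
  by apply/esym/W => //; apply/esym.
move=> ar br; rewrite -(subnK le_ab) expnD mulnC => E.
have : 2 ^ (b - a) = 1 %[mod d].
  apply: (@eqn_modMl_coprime d (2 ^ a)); last by rewrite muln1 -E.
  by rewrite coprime_sym coprimeXl // coprime2n (ord2_is_odd dr).
move/eqP; rewrite eqn_mod_dvd ?expn_gt0 // => dvd_d.
case: dr => _ [_ min_r]; case: (posnP (b - a)) => h.
  by rewrite h.
by case: (min_r _ h) => //; apply: leq_ltn_trans (leq_subr a b) br.
Qed.

Lemma triggering_divisor_exists d r :
  0 < d -> ord2_is d r -> exists2 d', triggering d' r & d' %| d.
Proof.
elim/ltn_ind: d => d IH d_gt0 dr.
case: (classic (exists e, [/\ 0 < e, e %| d, e != d & ord2_is e r])).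
  case=> e [e_gt0 ed ne er].
  have lt_ed : e < d by rewrite ltn_neqAle ne dvdn_leq.
  have [d' d'r d'e] := IH e lt_ed e_gt0 er.
  by exists d' => //; apply: dvdn_trans d'e ed.
move=> no_e; exists d => //; split=> //; split; first exact: ord2_is_odd dr.
by split=> // e e_gt0 ed ne er; apply: no_e; exists e.
Qed.

Definition bits_val (s : seq nat) : nat := foldr (fun a acc => a + 2 * acc) 0 s.

Fixpoint low_bits j o := if j is j'.+1 then o %% 2 :: low_bits j' (o %/ 2) else [::].

Lemma bits_val_rcons s a : bits_val (rcons s a) = bits_val s + 2 ^ size s * a.
Proof.
elim: s => [|b s IH] /=; first by rewrite expn0 mul1n addn0.
by rewrite IH expnS; lia.
Qed.

Lemma bits_val_lt s : all (fun a => a < 2) s -> bits_val s < 2 ^ size s.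
Proof.
by elim: s => [|a s IH] //= /andP [a_lt2 /IH]; rewrite expnS; lia.
Qed.

Lemma bits_val_inj s s' : size s = size s' -> all (fun a => a < 2) s ->
  all (fun a => a < 2) s' -> bits_val s = bits_val s' -> s = s'.
Proof.
elim: s s' => [|a s IH] [|a' s'] //= [eq_sz] /andP [a2 s2] /andP [a'2 s'2] E.
have [-> E'] : a = a' /\ bits_val s = bits_val s' by lia.
by rewrite (IH s').
Qed.

Lemma size_low_bits j o : size (low_bits j o) = j.
Proof. by elim: j o => //= j IH o; rewrite IH. Qed.

Lemma low_bits_lt2 j o : all (fun a => a < 2) (low_bits j o).
Proof. by elim: j o => //= j IH o; rewrite IH ltn_pmod. Qed.

Lemma bits_val_low_bits j o : bits_val (low_bits j o) = o %% 2 ^ j.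
Proof.
elim: j o => [|j IH] o /=; first by rewrite modn1.
have lt_b : o %% 2 < 2 by rewrite ltn_pmod.
have lt_R : o %/ 2 %% 2 ^ j < 2 ^ j by rewrite ltn_pmod // expn_gt0.
have defo : o = o %/ 2 %/ 2 ^ j * 2 ^ j.+1 + (o %% 2 + 2 * (o %/ 2 %% 2 ^ j)).
  rewrite {1}(divn_eq o 2) {1}(divn_eq (o %/ 2) (2 ^ j)) expnS.
  move: (o %/ 2 %/ 2 ^ j) (o %/ 2 %% 2 ^ j) (o %% 2) (2 ^ j) => Y R b P; lia.
by rewrite IH [in RHS]defo modnMDl; apply/esym/modn_small; rewrite expnS; lia.
Qed.

Local Notation tree_vert th := (vert (tgraph (regtree 2 th))).

Definition tree_parent (s : seq nat) := take (size s).-1 s.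

(* Depth j is recorded in the 2-adic valuation th - j and the path [a1; ...; aj] in the
   odd part, a1 = 1 being the least significant bit; so passing to the parent doubles the
   code modulo 2^th. *)
Definition tree_code th s := 2 ^ (th - size s) * bits_val s.

Lemma tree_code_nil th : tree_code th [::] = 0.
Proof. by rewrite /tree_code muln0. Qed.

Lemma tree_vert_parent th s : tree_vert th s -> tree_vert th (tree_parent s).
Proof.
case/and3P=> sz_s s2 hd_s; apply/and3P; split.
- by rewrite size_take; case: ifP => _; lia.
- by move: s2; rewrite -{1}(cat_take_drop (size s).-1 s) all_cat => /andP [].
- by move: hd_s; case: s {sz_s s2} => [|a [|b t]].
Qed.

Lemma tree_code_parent th s : tree_vert th s -> s != [::] ->
  tree_code th (tree_parent s) = 2 * tree_code th s %[mod 2 ^ th].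
Proof.
case/lastP: s => [|t a] //= /and3P [sz_s _ _] _.
rewrite size_rcons in sz_s.
rewrite /tree_parent /tree_code size_rcons -cats1 take_size_cat // cats1 bits_val_rcons.
have -> : 2 * (2 ^ (th - (size t).+1) * (bits_val t + 2 ^ size t * a)) =
          2 ^ th * a + 2 ^ (th - size t) * bits_val t.
  have E1 : 2 ^ (th - size t) = 2 * 2 ^ (th - (size t).+1).
    by rewrite -expnS; congr (2 ^ _); lia.
  have E2 : 2 ^ th = 2 ^ (th - size t) * 2 ^ size t by rewrite -expnD; congr (2 ^ _); lia.
  by rewrite E2 E1; lia.
by rewrite [2 ^ th * a]mulnC modnMDl.
Qed.

Lemma tree_code_lt th s : tree_vert th s -> tree_code th s < 2 ^ th.
Proof.
case/and3P=> sz_s s2 _; rewrite /tree_code -{2}(subnK sz_s) expnD.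
by rewrite ltn_pmul2l ?expn_gt0 // bits_val_lt.
Qed.

Lemma odd_bits_val_tree th s : tree_vert th s -> s != [::] -> odd (bits_val s).
Proof.
case: s => [|a s] //= /and3P [_ /andP [a2 _] /= hd] _.
have -> : a = 1 by lia.
by rewrite oddD oddM.
Qed.

Lemma logn_tree_code th s :
  tree_vert th s -> s != [::] -> logn 2 (tree_code th s) = th - size s.
Proof.
move=> vs s_nil; have odd_s := odd_bits_val_tree vs s_nil.
rewrite /tree_code lognM ?expn_gt0 ?(odd_gt0 odd_s) // pfactorK //.
by rewrite logn_coprime ?addn0 // coprime2n.
Qed.

Lemma tree_code_inj th s s' :
  tree_vert th s -> tree_vert th s' -> tree_code th s = tree_code th s' -> s = s'.
Proof.
have code_gt0 t : tree_vert th t -> t != [::] -> 0 < tree_code th t.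
  by move=> vt t_nil; rewrite muln_gt0 expn_gt0 (odd_gt0 (odd_bits_val_tree vt t_nil)).
move=> vs vs' E.
have [s0 | s_nil] := eqVneq s [::].
  have [-> // | s'_nil] := eqVneq s' [::].
  by have := code_gt0 _ vs' s'_nil; rewrite -E s0 tree_code_nil.
have [s'0 | s'_nil] := eqVneq s' [::].
  by have := code_gt0 _ vs s_nil; rewrite E s'0 tree_code_nil.
have eq_sz : size s = size s'.
  have := logn_tree_code vs s_nil; rewrite E logn_tree_code //.
  by case/and3P: vs => ? _ _; case/and3P: vs' => ? _ _; lia.
apply: bits_val_inj => //; [by case/and3P: vs | by case/and3P: vs' |].
by move/eqP: E; rewrite /tree_code eq_sz eqn_pmul2l ?expn_gt0 // => /eqP.
Qed.

Lemma tree_code_surj th A : A < 2 ^ th -> exists2 s, tree_vert th s & tree_code th s = A.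
Proof.
case: (posnP A) => [-> _ | A_gt0 lt_A]; first by exists [::]; rewrite ?tree_code_nil.
have [o co defA] := pfactor_coprime (isT : prime 2) A_gt0; set v := logn 2 A in defA.
have o_gt0 : 0 < o by move: A_gt0; rewrite defA muln_gt0 => /andP [].
have lt_v : v < th.
  rewrite -(ltn_exp2l _ _ (isT : 1 < 2)); apply: leq_ltn_trans lt_A.
  by rewrite defA leq_pmull.
have lt_o : o < 2 ^ (th - v).
  by rewrite -(ltn_pmul2r (expn_gt0 2 v)) -expnD subnK ?(ltnW lt_v) // -defA.
exists (low_bits (th - v) o).
  rewrite /= size_low_bits leq_subr low_bits_lt2 /=.
  case E: (th - v) => [|j]; first by lia.
  by rewrite /= modn2; move: co; rewrite coprime2n => ->.
rewrite /tree_code size_low_bits bits_val_low_bits modn_small // defA mulnC.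
by congr (_ * 2 ^ _); lia.
Qed.

Local Notation flower2 r th := (flower r (regtree 2 th)).

Definition flower_succ r (v : nat * seq nat) : nat * seq nat :=
  if v.2 == [::] then ((v.1 + 1) %% r, [::]) else (v.1, tree_parent v.2).

Lemma flower_edgeE r th v w : edge (flower2 r th) v w <-> w = flower_succ r v.
Proof.
case: v w => i s [j t]; rewrite /flower_succ /=.
have [-> | s_nil] /= := eqVneq s [::].
  split; first by case=> [[_ [-> nroot]] | [_ [-> ->]]] //; case: nroot.
  by case=> -> ->; right.
split; first by case=> [[-> [-> _]] | [s0 _]] //; rewrite s0 in s_nil.
by case=> -> ->; left; do 2!split=> //; case=> s0; rewrite s0 in s_nil.
Qed.

Lemma flower_succ_vert r th v : 0 < r ->
  vert (flower2 r th) v -> vert (flower2 r th) (flower_succ r v).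
Proof.
move=> r_gt0; case: v => i s [lt_ir vs]; rewrite /flower_succ /=.
by case: eqP => _ /=; split; rewrite ?ltn_pmod // tree_vert_parent.
Qed.

Lemma iter_flower_succ_root r m : iter m (flower_succ r) (0, [::]) = (m %% r, [::]).
Proof.
elim: m => [|m IH] /=; first by rewrite mod0n.
by rewrite IH /flower_succ /= modnDml addn1.
Qed.

Lemma component_Usq_sq_vert n x y : 0 < n ->
  vert (component (Usq n) x) y -> vert (component (Usq n) x) (y ^ 2 %% n).
Proof.
move=> n_gt0 [[lt_yn cop_y] xy].
have vy2 : vert (Usq n) (y ^ 2 %% n).
  by split; rewrite /= ?ltn_pmod ?coprime_modl ?coprimeXl.
by split=> //; apply: rst_trans xy (rst_step _ _ _ _ _).
Qed.

Section PrimitiveRoot.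

Variables n N g : nat.
Hypotheses (n_gt1 : 1 < n) (gP : primitive_root_mod n N g).

Definition gexp e := g ^ e %% n.

Lemma gexp_vert e : vert (Usq n) (gexp e).
Proof.
case: gP => cop_g _ _.
by split; rewrite /= ?ltn_pmod ?coprime_modl ?coprimeXl // ltnW.
Qed.

Lemma gexp_sq e : gexp e ^ 2 %% n = gexp (2 * e).
Proof. by rewrite /gexp modnXm -expnM mulnC. Qed.

Lemma gexp_eq e e' : gexp e = gexp e' <-> e = e' %[mod N].
Proof. by case: gP => _ geq _; apply: geq. Qed.

Lemma gexp_surj w : vert (Usq n) w -> exists e, w = gexp e.
Proof. by case: gP => _ _ gen [lt_wn cop_w]; apply: gen. Qed.

Lemma wconn_gexp_mul2X a m : wconn (Usq n) (gexp a) (gexp (a * 2 ^ m)).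
Proof.
elim: m => [|m IH]; first by rewrite expn0 muln1; apply: rst_refl.
apply: rst_trans IH (rst_step _ _ _ _ _); split; first exact: gexp_vert.
by split; [exact: gexp_vert | rewrite /= gexp_sq expnS mulnCA].
Qed.

Lemma wconn_gexp_invariant (P : nat -> Prop) x y :
  (forall e e', e = e' %[mod N] -> P e -> P e') -> (forall e, P (2 * e) <-> P e) ->
  wconn (Usq n) x y -> (exists2 e, x = gexp e & P e) -> exists2 e, y = gexp e & P e.
Proof.
move=> P_mod P_double xy.
suff: (exists2 e, x = gexp e & P e) <-> (exists2 e, y = gexp e & P e) by case.
elim: xy => {x y} [a b [va [_ ab]] | a | a b _ [ab ba] | a b c _ [ab ba] _ [bc cb]].
- rewrite /= in ab; split=> [[e ae Pe] | [e be Pe]].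
    by exists (2 * e); rewrite ?ab ?ae ?gexp_sq // P_double.
  have [e' ae'] := gexp_surj va; exists e' => //.
  apply/P_double; apply: P_mod Pe; apply/esym/gexp_eq.
  by rewrite -gexp_sq -ae' -ab.
- by [].
- by split.
- by split=> [/ab /bc | /cb /ba].
Qed.

Lemma gexp_period_ord2 e r : 0 < N -> 0 < r ->
  (forall m, gexp e ^ (2 ^ m) %% n = gexp e <-> r %| m) -> ord2_is (N %/ gcdn N e) r.
Proof.
move=> N_gt0 r_gt0 period; apply: ord2_is_dvdP => // m.
rewrite -dvdn_mul_divgcd // -period /gexp modnXm -expnM gexp_eq -[e in RHS]muln1.
rewrite mulnBr -eqn_mod_dvd ?leq_mul2l ?expn_gt0 ?orbT //.
by split=> /eqP.
Qed.

End PrimitiveRoot.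

Lemma flower_component_period n x r th : 0 < n -> 0 < r ->
  graph_iso (component (Usq n) x) (flower2 r th) ->
  exists2 w, vert (Usq n) w & forall m, w ^ (2 ^ m) %% n = w <-> r %| m.
Proof.
move=> n_gt0 r_gt0 [h [[h' h'K hK] hE]].
have vroot : vert (flower2 r th) (0, [::]) by [].
pose u := h' (exist _ _ vroot).
pose sq (y : vtype (component (Usq n) x)) : vtype (component (Usq n) x) :=
  exist _ (sval y ^ 2 %% n) (component_Usq_sq_vert n_gt0 (svalP y)).
have h_sq y : sval (h (sq y)) = flower_succ r (sval (h y)) by apply/flower_edgeE/hE.
have h_iter m : sval (h (iter m sq u)) = (m %% r, [::]).
  by rewrite -iter_flower_succ_root; elim: m => [|m /= <-]; rewrite /= ?hK.
have [[lt_wn _] _] := svalP u.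
have val_iter m : sval (iter m sq u) = sval u ^ (2 ^ m) %% n.
  elim: m => [|m /= ->]; first by rewrite expn1 modn_small.
  by rewrite modnXm -expnM -expnSr.
exists (sval u); first by case: (svalP u).
move=> m; rewrite -val_iter /dvdn; split=> [iter_u | /eqP mod0].
  by have := h_iter m; rewrite (@vtype_eq (component _ x) _ _ iter_u) /u hK => -[<-].
have: h (iter m sq u) = h u by apply: vtype_eq; rewrite h_iter /u hK mod0.
by move/(congr1 h'); rewrite !h'K => ->.
Qed.

Lemma flower_component_triggering n N g th mu r :
  1 < n -> primitive_root_mod n N g -> N = 2 ^ th * mu -> odd mu -> 0 < r ->
  has_component_iso (Usq n) (flower2 r th) -> exists d, triggering d r /\ d %| mu.
Proof.
move=> n_gt1 gP defN mu_odd r_gt0 [x [_ iso_x]].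
have [w vw period] := flower_component_period (ltnW n_gt1) r_gt0 iso_x.
have [e defw] := gexp_surj gP vw; rewrite defw in period.
have N_gt0 : 0 < N by rewrite defN muln_gt0 expn_gt0 (odd_gt0 mu_odd).
have Dr := gexp_period_ord2 gP N_gt0 r_gt0 period.
have D_mu : N %/ gcdn N e %| mu.
  have := dvdn_div (dvdn_gcdl N e).
  by rewrite [in X in _ %| X]defN Gauss_dvdr // coprimeXr // coprimen2 (ord2_is_odd Dr).
have D_gt0 : 0 < N %/ gcdn N e.
  by rewrite divn_gt0 ?gcdn_gt0 ?N_gt0 // dvdn_leq ?dvdn_gcdl.
have [d dr d_D] := triggering_divisor_exists D_gt0 Dr.
by exists d; split=> //; apply: dvdn_trans d_D D_mu.
Qed.

Section FlowerExponent.

Variables th mu d r : nat.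
Hypotheses (mu_odd : odd mu) (dr : ord2_is d r) (d_mu : d %| mu).

Local Notation c := (mu %/ d).
Local Notation F := (flower2 r th).

Let r_gt0 : 0 < r. Proof. by case: dr. Qed.
Let coprime_2mu : coprime (2 ^ th) mu.
Proof. by rewrite coprimeXl // coprime2n. Qed.

(* Vertex (i, s) lies |s| steps above root i, so its Z/mu-part is c * 2^(i - |s|);
   (r - 1) * |s| stands for -|s| modulo r. *)
Definition flower_level (v : nat * seq nat) := (v.1 + (r - 1) * size v.2) %% r.

Definition flower_exp v :=
  chinese (2 ^ th) mu (tree_code th v.2) (c * 2 ^ flower_level v).

Definition on_mu_orbit e := exists i, e = c * 2 ^ i %[mod mu].

Lemma flower_level_lt v : flower_level v < r.
Proof. exact: ltn_pmod. Qed.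

Lemma flower_level_succ v : flower_level (flower_succ r v) = (flower_level v).+1 %% r.
Proof.
case: v => i s; rewrite /flower_level /flower_succ /=.
have [-> | s_nil] /= := eqVneq s [::].
  by rewrite !muln0 !addn0 modn_mod -modnDml addn1.
rewrite -[(_ %% r).+1]addn1 modnDml /tree_parent size_take.
case: s s_nil => [|a t] //= _; rewrite ltnSn.
have -> : i + (r - 1) * (size t).+1 + 1 = i + (r - 1) * size t + r.
  by rewrite mulnS; move: ((r - 1) * size t) => X; lia.
by rewrite modnDr.
Qed.

Lemma eq_flower_exp e v : e = flower_exp v %[mod 2 ^ th * mu] <->
  e = tree_code th v.2 %[mod 2 ^ th] /\ e = c * 2 ^ flower_level v %[mod mu].
Proof.
rewrite /flower_exp; split.
  by move/eqP; rewrite chinese_remainder // => /andP [/eqP -> /eqP ->];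
     rewrite chinese_modl ?chinese_modr.
by case=> e2 emu; apply/eqP; rewrite chinese_remainder // e2 emu
     chinese_modl // chinese_modr // !eqxx.
Qed.

Lemma flower_exp_mod v :
  flower_exp v = tree_code th v.2 %[mod 2 ^ th] /\
  flower_exp v = c * 2 ^ flower_level v %[mod mu].
Proof. exact/eq_flower_exp. Qed.

Lemma mu_orbit_eq a b : c * 2 ^ a = c * 2 ^ b %[mod mu] <-> 2 ^ a = 2 ^ b %[mod d].
Proof.
have d_gt0 : 0 < d by rewrite odd_gt0 // (dvdn_odd d_mu).
have c_gt0 : 0 < c by rewrite divn_gt0 // dvdn_leq // odd_gt0.
rewrite -{2 4}(divnK d_mu) -muln_modr -muln_modr.
by split=> [/eqP | -> //]; rewrite eqn_pmul2l // => /eqP.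
Qed.

Lemma flower_exp_inj v w : vert F v -> vert F w ->
  flower_exp v = flower_exp w %[mod 2 ^ th * mu] -> v = w.
Proof.
case: v w => i s [j t] [/= lt_ir vs] [/= lt_jr vt] /eq_flower_exp [/= e2 emu].
have [v2 vmu] := flower_exp_mod (i, s).
have eq_st : s = t.
  apply: (tree_code_inj vs vt).
  by rewrite -(modn_small (tree_code_lt vs)) -(modn_small (tree_code_lt vt)) -v2 e2.
subst t; have : flower_level (i, s) = flower_level (j, s).
  by apply: (expn2_inj_ord dr); rewrite ?flower_level_lt //; apply/mu_orbit_eq; rewrite -vmu.
by rewrite /flower_level /= => /eqP; rewrite eqn_modDr !modn_small // => /eqP ->.
Qed.

Lemma flower_exp_succ v : vert F v ->
  flower_exp (flower_succ r v) = 2 * flower_exp v %[mod 2 ^ th * mu].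
Proof.
case: v => i s [_ vs]; apply/esym/eq_flower_exp; have [v2 vmu] := flower_exp_mod (i, s).
split.
  rewrite -modnMmr v2 modnMmr /flower_succ /=.
  have [-> | s_nil] /= := eqVneq s [::]; first by rewrite tree_code_nil.
  by rewrite tree_code_parent.
rewrite -modnMmr vmu modnMmr mulnCA -expnS flower_level_succ; apply/mu_orbit_eq.
by apply: (expn2_eq_mod_ord dr); rewrite modn_mod.
Qed.

Lemma flower_exp_surj e i : e = c * 2 ^ i %[mod mu] ->
  exists2 v, vert F v & e = flower_exp v %[mod 2 ^ th * mu].
Proof.
move=> emu; have [s vs code_s] := tree_code_surj (ltn_pmod e (expn_gt0 2 th)).
have lvl : flower_level ((i %% r + size s) %% r, s) = i %% r.
  rewrite /flower_level /= modnDml -addnA -{1}[size s]mul1n -mulnDl subnKC //.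
  by rewrite addnC mulnC modnMDl modn_mod.
exists ((i %% r + size s) %% r, s); first by split; rewrite /= ?ltn_pmod.
apply/eq_flower_exp; rewrite /= code_s modn_mod lvl emu; split=> //.
by apply/mu_orbit_eq; apply: expn2_mod_ord dr.
Qed.

Lemma flower_exp_mul2X v : flower_exp v * 2 ^ th =
  flower_exp (0, [::]) * 2 ^ (th + flower_level v) %[mod 2 ^ th * mu].
Proof.
have [_ vmu] := flower_exp_mod v; have [_ rmu] := flower_exp_mod (0, [::]).
apply/eqP; rewrite chinese_remainder //; apply/andP; split.
  by rewrite expnD mulnCA modnMl modnMr.
apply/eqP; rewrite -modnMml vmu modnMml -[in RHS]modnMml rmu modnMml.
by rewrite /flower_level /= muln0 mod0n muln1 expnD mulnAC -mulnA.
Qed.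

Lemma on_mu_orbit_flower_exp v : on_mu_orbit (flower_exp v).
Proof. by exists (flower_level v); case: (flower_exp_mod v). Qed.

Lemma on_mu_orbit_mod e e' : e = e' %[mod 2 ^ th * mu] -> on_mu_orbit e -> on_mu_orbit e'.
Proof.
move/eqP; rewrite chinese_remainder // => /andP [_ /eqP ee'] [i ei].
by exists i; rewrite -ee'.
Qed.

Lemma on_mu_orbit_double e : on_mu_orbit (2 * e) <-> on_mu_orbit e.
Proof.
split=> [[i ei] | [i ei]]; last first.
  by exists i.+1; rewrite expnS mulnCA -modnMmr ei modnMmr.
exists (i + r).-1; apply: (@eqn_modMl_coprime mu 2); first by rewrite coprimen2.
rewrite ei mulnCA -expnS prednK ?addn_gt0 ?r_gt0 ?orbT //; apply/mu_orbit_eq.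
by apply: (expn2_eq_mod_ord dr); rewrite modnDr.
Qed.

End FlowerExponent.

Lemma flower_component_of_ord2 n g th mu d r :
  1 < n -> primitive_root_mod n (2 ^ th * mu) g -> odd mu -> ord2_is d r -> d %| mu ->
  has_component_iso (Usq n) (flower2 r th).
Proof.
move=> n_gt1 gP mu_odd dr d_mu.
have r_gt0 : 0 < r by case: dr.
pose f v := gexp n g (flower_exp th mu d r v).
pose x0 := f (0, [::]).
have f_inj v w : vert (flower2 r th) v -> vert (flower2 r th) w -> f v = f w -> v = w.
  by move=> vv vw /(gexp_eq gP); apply: flower_exp_inj.
exists x0; split; first exact: gexp_vert n_gt1 gP _.
apply: graph_iso_sym; apply: (@graph_iso_of_map (flower2 r th) (component (Usq n) x0) f).
- move=> v vv; split; first exact: gexp_vert n_gt1 gP _.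
  rewrite /x0 /f; apply: rst_trans (wconn_gexp_mul2X n_gt1 gP _ (th + flower_level r v)) _.
  have -> : gexp n g (flower_exp th mu d r (0, [::]) * 2 ^ (th + flower_level r v)) =
            gexp n g (flower_exp th mu d r v * 2 ^ th).
    by apply/(gexp_eq gP)/esym/flower_exp_mul2X.
  by apply: rst_sym; apply: wconn_gexp_mul2X n_gt1 gP _ _.
- exact: f_inj.
- move=> y [vy x0y].
  have x0_orb : exists2 e, x0 = gexp n g e & on_mu_orbit mu d e.
    by exists (flower_exp th mu d r (0, [::])); last exact: on_mu_orbit_flower_exp.
  have [e -> [i ei]] := wconn_gexp_invariant gP (@on_mu_orbit_mod th mu d mu_odd)
    (on_mu_orbit_double mu_odd dr d_mu) x0y x0_orb.
  have [v vv ev] := flower_exp_surj th mu_odd dr d_mu ei.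
  by exists v => //; apply/(gexp_eq gP)/esym.
- move=> v w vv vw; rewrite flower_edgeE /= /f gexp_sq.
  have succ_v := flower_exp_succ mu_odd dr d_mu vv.
  split=> [-> | /(gexp_eq gP) succ_w]; first exact/(gexp_eq gP).
  apply: (f_inj _ _ vw (flower_succ_vert r_gt0 vv)); rewrite /f.
  by apply/(gexp_eq gP); rewrite succ_w succ_v.
Qed.

Theorem corollary14 (p k theta mu r : nat) :
  prime p -> odd p -> 1 <= k ->
  totient (p ^ k) = 2 ^ theta * mu -> odd mu ->
  1 <= r ->
  (has_component_iso (Usq (p ^ k)) (flower r (regtree 2 theta)) <->
   exists d, triggering d r /\ d %| mu).
Proof.
move=> p_pr p_odd k_gt0 totient_pk mu_odd r_gt0.
have [g gP] := odd_prime_power_primitive_root p_pr p_odd k_gt0.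
have pk_gt1 : 1 < p ^ k by rewrite -{1}(exp1n k) ltn_exp2r // prime_gt1.
split; first exact: flower_component_triggering pk_gt1 gP totient_pk mu_odd r_gt0.
case=> d [[_ [_ [dr _]]] d_mu]; rewrite totient_pk in gP.
exact: flower_component_of_ord2 pk_gt1 gP mu_odd dr d_mu.
Qed.
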